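(* Let $L\subseteq Q$ be a dense extension of symmetric Leibniz algebras with $\mathrm{ran}(Q)=\mathrm{lan}(Q)=\{0\}$. Suppose that $\mathscr{A}(Q)$ is strong right ideally absorbed into $\mathscr{A}_0$. Then $Q$ is an algebra of quotients of $L$.
   Context: A symmetric Leibniz algebra satisfies both $[x,[y,z]]=[[x,y],z]-[[x,z],y]$ and $[x,[y,z]]=[[x,y],z]+[y,[x,z]]$. $\mathrm{lan}(Q)=\{x\in Q:[x,Q]=0\}$, $\mathrm{ran}(Q)=\{x\in Q:[Q,x]=0\}$. For $x\in Q$, $R_x(u)=[u,x]$, $L_x(u)=[x,u]$. $M(Q)$ is the associative subalgebra of $\mathrm{End}(Q)$ generated by the identity and all $R_x,L_x$; $L$ is dense in $Q$ if the only $\mu\in M(Q)$ with $\mu(L)=\{0\}$ is $\mu=0$. $\mathscr{A}(Q)$ is the associative subalgebra of $\mathrm{End}(Q)$ generated by all $R_x,L_x$ ($x\in Q$), and $\mathscr{A}_0=\{\mu\in\mathscr{A}(Q):\mu(L)\subseteq L\}$. For an associative algebra $S$ with subalgebra $A$, $S$ is strong right ideally absorbed into $A$ if for any $p,q\in S\setminus\{0\}$ there is a two-sided ideal $I$ of $A$ with $\mathrm{lan}_A(I)=\{a\in A: aI=0\}=\{0\}$ such that $pI\ne\{0\}$ or $qI\ne\{0\}$, and both $pI\subseteq A$, $qI\subseteq A$. With $\mathscr{A}_Q(L)$ the associative algebra generated by $R_x,L_y$ ($x,y\in L$), ${}_L(q)=\mathbb{F}q+\{\sum\xi_i(q):\xi_i\in\mathscr{A}_Q(L)\}$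 and $(L:q)=\{x\in L:[x,{}_L(q)]\subseteq L,[{}_L(q),x]\subseteq L\}$; $Q$ is an algebra of quotients of $L$ if for all $p,q\in Q$, $p\ne0$, there is $x\in(L:q)$ with $[x,p]\ne0$ or $y\in(L:q)$ with $[p,y]\ne0$. *)

From mathcomp Require Import all_boot all_algebra.
Set Implicit Arguments. Unset Strict Implicit. Unset Printing Implicit Defensive.
Import GRing.Theory.
Local Open Scope ring_scope.

Definition bilinear_br (F : fieldType) (Q : lmodType F) (br : Q -> Q -> Q) :=
  (forall (a : F) x y z, br (a *: x + y) z = a *: br x z + br y z) /\
  (forall (a : F) x y z, br z (a *: x + y) = a *: br z x + br z y).

Definition symmetric_leibniz (F : fieldType) (Q : lmodType F) (br : Q -> Q -> Q) :=
  bilinear_br br /\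
  (forall x y z, br x (br y z) = br (br x y) z - br (br x z) y) /\
  (forall x y z, br x (br y z) = br (br x y) z + br y (br x z)).

Definition subalgebra (F : fieldType) (Q : lmodType F) (br : Q -> Q -> Q) (L : Q -> Prop) :=
  L 0 /\ (forall (a : F) x y, L x -> L y -> L (a *: x + y)) /\
  (forall x y, L x -> L y -> L (br x y)).

Definition lan_trivial (F : fieldType) (Q : lmodType F) (br : Q -> Q -> Q) :=
  forall x, (forall y, br x y = 0) -> x = 0.
Definition ran_trivial (F : fieldType) (Q : lmodType F) (br : Q -> Q -> Q) :=
  forall x, (forall y, br y x = 0) -> x = 0.

Definition Rop (F : fieldType) (Q : lmodType F) (br : Q -> Q -> Q) (x : Q) : Q -> Q :=
  fun u => br u x.
Definition Lop (F : fieldType) (Q : lmodType F) (br : Q -> Q -> Q) (x : Q) : Q -> Q :=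
  fun u => br x u.

Inductive gen_alg (F : fieldType) (Q : lmodType F) (G : (Q -> Q) -> Prop) : (Q -> Q) -> Prop :=
  | ga_gen f : G f -> gen_alg G f
  | ga_zero : gen_alg G (fun _ => 0)
  | ga_lin (a : F) f g : gen_alg G f -> gen_alg G g -> gen_alg G (fun u => a *: f u + g u)
  | ga_comp f g : gen_alg G f -> gen_alg G g -> gen_alg G (fun u => f (g u)).

Definition MQ (F : fieldType) (Q : lmodType F) (br : Q -> Q -> Q) : (Q -> Q) -> Prop :=
  gen_alg (fun f => f = id \/ exists x, f = Rop br x \/ f = Lop br x).

Definition AQ (F : fieldType) (Q : lmodType F) (br : Q -> Q -> Q) : (Q -> Q) -> Prop :=
  gen_alg (fun f => exists x, f = Rop br x \/ f = Lop br x).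

Definition AQL (F : fieldType) (Q : lmodType F) (br : Q -> Q -> Q) (L : Q -> Prop) :
  (Q -> Q) -> Prop :=
  gen_alg (fun f => exists x, L x /\ (f = Rop br x \/ f = Lop br x)).

Definition A0 (F : fieldType) (Q : lmodType F) (br : Q -> Q -> Q) (L : Q -> Prop) :
  (Q -> Q) -> Prop :=
  fun mu => AQ br mu /\ (forall u, L u -> L (mu u)).

Definition dense (F : fieldType) (Q : lmodType F) (br : Q -> Q -> Q) (L : Q -> Prop) :=
  forall mu, MQ br mu -> (forall u, L u -> mu u = 0) -> forall u, mu u = 0.

Definition two_sided_ideal (F : fieldType) (Q : lmodType F) (A I : (Q -> Q) -> Prop) :=
  (forall i, I i -> A i) /\ I (fun _ => 0) /\
  (forall (a : F) i j, I i -> I j -> I (fun u => a *: i u + j u)) /\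
  (forall a i, A a -> I i -> I (fun u => a (i u)) /\ I (fun u => i (a u))).

Definition lan_ideal_trivial (F : fieldType) (Q : lmodType F) (A I : (Q -> Q) -> Prop) :=
  forall a, A a -> (forall i, I i -> forall u, a (i u) = 0) -> forall u, a u = 0.

Definition strong_right_ideally_absorbed (F : fieldType) (Q : lmodType F)
  (S A : (Q -> Q) -> Prop) :=
  forall p q, S p -> S q -> ~ (forall u, p u = 0) -> ~ (forall u, q u = 0) ->
  exists I, two_sided_ideal A I /\ lan_ideal_trivial A I /\
    ((exists i, I i /\ exists u, p (i u) <> 0) \/ (exists i, I i /\ exists u, q (i u) <> 0)) /\
    (forall i, I i -> A (fun u => p (i u))) /\ (forall i, I i -> A (fun u => q (i u))).

Fixpoint all_in (T : Type) (P : T -> Prop) (s : seq T) : Prop :=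
  if s is x :: s' then P x /\ all_in P s' else True.

Definition genL (F : fieldType) (Q : lmodType F) (br : Q -> Q -> Q) (L : Q -> Prop) (q : Q) :
  Q -> Prop :=
  fun w => exists (lam : F) (s : seq (Q -> Q)),
    all_in (AQL br L) s /\ w = lam *: q + \sum_(xi <- s) xi q.

Definition Lcolon (F : fieldType) (Q : lmodType F) (br : Q -> Q -> Q) (L : Q -> Prop) (q : Q) :
  Q -> Prop :=
  fun x => L x /\ (forall w, genL br L q w -> L (br x w) /\ L (br w x)).

Definition algebra_of_quotients (F : fieldType) (Q : lmodType F) (br : Q -> Q -> Q)
  (L : Q -> Prop) :=
  forall p q, p <> 0 ->
    (exists x, Lcolon br L q x /\ br x p <> 0) \/ (exists y, Lcolon br L q y /\ br p y <> 0).

(* Absorbing (R_p, R_p) gives i1 in I1 with R_p i1 a nonzero element of A_0;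
   absorbing (R_q, L_q) gives an ideal I of A_0 with trivial left annihilator
   and R_q I, L_q I inside A_0.  So R_p i1 i2 <> 0 for some i2 in I, and by
   density [j u, p] <> 0 for j = i1 i2 in I and some u in L.  Then x = j u is
   in (L : q): for every b in the unital algebra generated by the R_a, L_a
   (a in L), b j is again in I, so b x, [b x, q] and [q, b x] lie in L; the
   Leibniz identities carry this from q to all of _L(q). *)
From Stdlib Require Import Classical.
From mathcomp Require Import all_boot all_algebra.
Set Implicit Arguments. Unset Strict Implicit. Unset Printing Implicit Defensive.
Import GRing.Theory.
Local Open Scope ring_scope.

Section GeneratedAlgebra.
Variables (F : fieldType) (Q : lmodType F).

Definition subspace (X : Q -> Prop) :=
  X 0 /\ forall (a : F) u v, X u -> X v -> X (a *: u + v).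

Lemma subspaceN X x : subspace X -> X x -> X (- x).
Proof. by move=> [X0 Xlin] Xx; have := Xlin (-1) _ _ Xx X0; rewrite addr0 scaleN1r. Qed.

Lemma subspaceB X x y : subspace X -> X x -> X y -> X (x - y).
Proof.
move=> SX Xx Xy; have := SX.2 1 _ _ Xx (subspaceN SX Xy).
by rewrite scale1r.
Qed.

Lemma subspace_sum X (T : Type) (P : T -> Prop) (f : T -> Q) (s : seq T) :
  subspace X -> (forall t, P t -> X (f t)) -> all_in P s -> X (\sum_(t <- s) f t).
Proof.
move=> [X0 Xlin] XP; elim: s => [_ | t s IH [Pt Ps]]; first by rewrite big_nil.
by rewrite big_cons -[f t]scale1r; apply: Xlin; [apply: XP | apply: IH].
Qed.

Lemma gen_alg_mono (G1 G2 : (Q -> Q) -> Prop) :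
  (forall f, G1 f -> G2 f) -> forall f, gen_alg G1 f -> gen_alg G2 f.
Proof.
move=> G12 f; elim=> {f} [f /G12 | | a f g _ Hf _ Hg | f g _ Hf _ Hg].
- exact: ga_gen.
- exact: ga_zero.
- exact: ga_lin.
- exact: ga_comp.
Qed.

Lemma gen_alg_stable (G : (Q -> Q) -> Prop) X :
  subspace X -> (forall f, G f -> forall u, X u -> X (f u)) ->
  forall f, gen_alg G f -> forall u, X u -> X (f u).
Proof.
move=> [X0 Xlin] XG f; elim=> {f} [f /XG // | // | a f g _ Xf _ Xg u Xu |].
- exact: Xlin (Xf u Xu) (Xg u Xu).
- by move=> f g _ Xf _ Xg u Xu; apply: Xf; apply: Xg.
Qed.

Lemma gen_alg_left_closed (A G I : (Q -> Q) -> Prop) :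
  two_sided_ideal A I -> (forall f i, G f -> I i -> I (fun u => f (i u))) ->
  forall f i, gen_alg G f -> I i -> I (fun u => f (i u)).
Proof.
move=> [_ [I0 [Ilin _]]] IG f i Gf; elim: Gf i => {f} [f Gf i | // | a f g _ If _ Ig i Ii |].
- exact: IG.
- exact: Ilin (If _ Ii) (Ig _ Ii).
- by move=> f g _ If _ Ig i Ii; apply: If; apply: Ig.
Qed.

Lemma lan_ideal_witness (A I : (Q -> Q) -> Prop) a :
  lan_ideal_trivial A I -> A a -> ~ (forall u, a u = 0) ->
  exists i, I i /\ ~ (forall u, a (i u) = 0).
Proof.
move=> lanI Aa a0; apply: NNPP => none; apply: a0; apply: lanI => // i Ii u.
by apply: NNPP => aiu; apply: none; exists i; split=> // /(_ u).
Qed.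

End GeneratedAlgebra.

Section Denominators.
Variables (F : fieldType) (Q : lmodType F) (br : Q -> Q -> Q) (L : Q -> Prop).
Hypotheses (SL : symmetric_leibniz br) (SA : subalgebra br L).

Lemma br0l z : br 0 z = 0.
Proof.
have := SL.1.1 1 0 0 z; rewrite !scale1r addr0 => E.
by apply: (addrI (br 0 z)); rewrite addr0 -E.
Qed.

Lemma br0r z : br z 0 = 0.
Proof.
have := SL.1.2 1 0 0 z; rewrite !scale1r addr0 => E.
by apply: (addrI (br z 0)); rewrite addr0 -E.
Qed.

Lemma brC_br x y z : br (br x y) z = - br z (br x y).
Proof.
have [I1 I2] := SL.2.
have E := addrI _ (etrans (esym (I1 x z y)) (I2 x z y)).
by rewrite -E opprK.
Qed.

Lemma subalgebra_subspace : subspace L.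
Proof. by case: SA => L0 [Llin _]. Qed.

Lemma Rop_AQ x : AQ br (Rop br x).
Proof. by apply: ga_gen; exists x; left. Qed.

Lemma Lop_AQ x : AQ br (Lop br x).
Proof. by apply: ga_gen; exists x; right. Qed.

Lemma AQ_MQ f : AQ br f -> MQ br f.
Proof. by apply: gen_alg_mono => g [x Hx]; right; exists x. Qed.

Lemma Rop_A0 a : L a -> A0 br L (Rop br a).
Proof. by move=> La; split=> [|u Lu]; [apply: Rop_AQ | apply: SA.2.2]. Qed.

Lemma Lop_A0 a : L a -> A0 br L (Lop br a).
Proof. by move=> La; split=> [|u Lu]; [apply: Lop_AQ | apply: SA.2.2]. Qed.

Definition MQL : (Q -> Q) -> Prop :=
  gen_alg (fun f => f = id \/ exists a, L a /\ (f = Rop br a \/ f = Lop br a)).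

Lemma MQL_id : MQL id.
Proof. by apply: ga_gen; left. Qed.

Lemma MQL_Rop a : L a -> MQL (Rop br a).
Proof. by move=> La; apply: ga_gen; right; exists a; split=> //; left. Qed.

Lemma MQL_subalgebra f u : MQL f -> L u -> L (f u).
Proof.
move=> Mf; apply: (gen_alg_stable subalgebra_subspace _ Mf).
by move=> g [-> // | [a [La [-> | ->]]]] v Lv; apply: SA.2.2.
Qed.

Lemma dense_witness mu :
  dense br L -> MQ br mu -> ~ (forall u, mu u = 0) -> exists u, L u /\ mu u <> 0.
Proof.
move=> D Mmu mu0; apply: NNPP => none; apply: mu0; apply: D => // u Lu.
by apply: NNPP => muu; apply: none; exists u.
Qed.

Definition strong_denominator (q x : Q) :=
  forall b, MQL b -> L (b x) /\ L (br (b x) q) /\ L (br q (b x)).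

Definition denominated (q w : Q) :=
  forall x, strong_denominator q x -> L (br x w) /\ L (br w x).

Lemma strong_denominator_MQL q b x :
  MQL b -> strong_denominator q x -> strong_denominator q (b x).
Proof. by move=> Mb Sx c Mc; apply: Sx (ga_comp Mc Mb). Qed.

Lemma denominated_subspace q : subspace (denominated q).
Proof.
have [L0 Llin] := subalgebra_subspace.
split=> [x _ | a u v Wu Wv x Sx]; first by rewrite br0l br0r.
have [? ?] := Wu x Sx; have [? ?] := Wv x Sx.
by rewrite SL.1.1 SL.1.2; split; apply: Llin.
Qed.

Lemma denominated_self q : denominated q q.
Proof. by move=> x /(_ id MQL_id) [_ []]. Qed.

Lemma denominated_Rop q a w : L a -> denominated q w -> denominated q (br w a).
Proof.
move=> La Ww x Sx.
have Sxa : strong_denominator q (br x a) := strong_denominator_MQL (MQL_Rop La) Sx.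
have Lx : L (br x (br w a)).
  rewrite SL.2.1; apply: subspaceB subalgebra_subspace _ (Ww _ Sxa).1.
  by apply: SA.2.2 => //; apply: (Ww _ Sx).1.
by rewrite brC_br; split=> //; apply: subspaceN subalgebra_subspace _.
Qed.

Lemma denominated_Lop q a w : L a -> denominated q w -> denominated q (br a w).
Proof.
move=> La Ww x Sx.
have Sxa : strong_denominator q (br x a) := strong_denominator_MQL (MQL_Rop La) Sx.
have Lx : L (br x (br a w)).
  rewrite SL.2.1; apply: subspaceB subalgebra_subspace (Ww _ Sxa).1 _.
  by apply: SA.2.2 => //; apply: (Ww _ Sx).1.
by rewrite brC_br; split=> //; apply: subspaceN subalgebra_subspace _.
Qed.

Lemma denominated_genL q w : genL br L q w -> denominated q w.
Proof.
have Wsub := denominated_subspace q.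
have WAQL : forall f, AQL br L f -> denominated q (f q).
  move=> f Af; apply: (gen_alg_stable Wsub _ Af (denominated_self (q := q))).
  by move=> g [a [La [-> | ->]]] v; [apply: denominated_Rop | apply: denominated_Lop].
move=> [lam [s [As ->]]]; apply: Wsub.2; first exact: denominated_self.
exact: subspace_sum Wsub WAQL As.
Qed.

Lemma strong_denominator_Lcolon q x : strong_denominator q x -> Lcolon br L q x.
Proof.
move=> Sx; split; first exact: (Sx id MQL_id).1.
by move=> w /denominated_genL/(_ x Sx).
Qed.

Lemma strong_denominator0 u : L u -> strong_denominator 0 u.
Proof.
move=> Lu b Mb; rewrite br0l br0r.
by split; [apply: MQL_subalgebra | split; apply: subalgebra_subspace.1].
Qed.

Lemma ideal_strong_denominator q (I : (Q -> Q) -> Prop) j u :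
  two_sided_ideal (A0 br L) I ->
  (forall i, I i -> A0 br L (fun v => Rop br q (i v))) ->
  (forall i, I i -> A0 br L (fun v => Lop br q (i v))) ->
  I j -> L u -> strong_denominator q (j u).
Proof.
move=> HI RqI LqI Ij Lu b Mb.
have Ibj : I (fun v => b (j v)).
  apply: (gen_alg_left_closed HI _ Mb Ij) => f i [-> // | [a [La [-> | ->]]]] Ii.
  - exact: (HI.2.2.2 _ _ (Rop_A0 La) Ii).1.
  - exact: (HI.2.2.2 _ _ (Lop_A0 La) Ii).1.
split; first exact: (HI.1 _ Ibj).2 _ Lu.
by split; [apply: (RqI _ Ibj).2 | apply: (LqI _ Ibj).2].
Qed.

End Denominators.

Theorem proposition6p9 (F : fieldType) (Q : lmodType F) (br : Q -> Q -> Q) (L : Q -> Prop) :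
  symmetric_leibniz br -> subalgebra br L -> dense br L ->
  ran_trivial br -> lan_trivial br ->
  strong_right_ideally_absorbed (AQ br) (A0 br L) ->
  algebra_of_quotients br L.
Proof.
move=> SL SA D ranQ lanQ absorb p q p0.
have Rp0 : ~ (forall u, Rop br p u = 0) by move=> /ranQ.
have [-> | q0] := classic (q = 0).
  have [u [Lu pu]] := dense_witness D (AQ_MQ (Rop_AQ br p)) Rp0.
  left; exists u; split; last exact: pu.
  by apply: strong_denominator_Lcolon => //; apply: strong_denominator0.
have Rq0 : ~ (forall u, Rop br q u = 0) by move=> /ranQ.
have Lq0 : ~ (forall u, Lop br q u = 0) by move=> /lanQ.
have [I1 [[I1A0 _] [_ [I1p [RpI1 _]]]]] :=
  absorb _ _ (Rop_AQ br p) (Rop_AQ br p) Rp0 Rp0.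
have [i1 [I1i1 pi1]] : exists i, I1 i /\ ~ (forall u, Rop br p (i u) = 0)
  by case: I1p => -[i [Ii [u piu]]]; exists i; split=> // /(_ u).
have [I [HI [lanI [_ [RqI LqI]]]]] := absorb _ _ (Rop_AQ br q) (Lop_AQ br q) Rq0 Lq0.
have [i2 [Ii2 pi1i2]] := lan_ideal_witness lanI (RpI1 _ I1i1) pi1.
have Ij : I (fun v => i1 (i2 v)) := (HI.2.2.2 _ _ (I1A0 _ I1i1) Ii2).1.
have Mpj : MQ br (fun v => Rop br p (i1 (i2 v))).
  by apply: AQ_MQ; apply: ga_comp (Rop_AQ br p) (HI.1 _ Ij).1.
have [u [Lu pju]] := dense_witness D Mpj pi1i2.
left; exists (i1 (i2 u)); split; last exact: pju.
by apply: strong_denominator_Lcolon => //; apply: ideal_strong_denominator HI RqI LqI Ij Lu.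
Qed.
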